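(* Let $t_0<t_1<+\infty$ and let $a_{jk}(t),\ c_{jk}(t)$ ($j,k=1,2$) be complex-valued continuous functions on $[t_0;t_1)$ with $c_{11},c_{22}$ real-valued and $c_{21}=\overline{c}_{12}$, and let $b_1(t),b_2(t)$ be real-valued continuous functions with $b_j(t)>0$, $t\in[t_0;t_1)$, $j=1,2$. Assume that the functions $a_{12}(t)/b_1(t)$ and $\overline{a}_{21}(t)/b_2(t)$ are continuously differentiable on $[t_0;t_1)$. Let $z_{11}(t),z_{22}(t)$ be real-valued and $y(t),v(t)$ complex-valued continuously differentiable functions on $[t_0;t_1)$ satisfying, for $t\in[t_0;t_1)$, the system $$z_{11}'+b_1z_{11}^2+2(\mathrm{Re}\,a_{11})z_{11}+b_2|y|^2-\frac{|a_{21}|^2}{b_2}-c_{11}=0,$$ $$y'+\bigl[b_1z_{11}+b_2z_{22}+\overline{a}_{11}+a_{22}\bigr]y+\Bigl(a_{12}-\frac{b_1}{b_2}\overline{a}_{21}\Bigr)z_{11}-\Bigl(\frac{\overline{a}_{21}}{b_2}\Bigr)'-\frac{\overline{a}_{21}}{b_2}\bigl(\overline{a}_{11}+a_{22}\bigr)-c_{12}=0,$$ and the system $$z_{22}'+b_2z_{22}^2+2(\mathrm{Re}\,a_{22})z_{22}+b_1|v|^2-\frac{|a_{12}|^2}{b_1}-c_{22}=0,$$ $$v'+\bigl[b_1z_{11}+b_2z_{22}+\overline{a}_{11}+a_{22}\bigr]v+\Bigl(\overline{a}_{21}-\frac{b_2}{b_1}a_{12}\Bigr)z_{22}-\Bigl(\frac{a_{12}}{b_1}\Bigr)'-\frac{a_{12}}{b_1}\bigl(\overline{a}_{11}+a_{22}\bigr)-c_{12}=0,$$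 (all coefficients evaluated at $t$), and such that $z_{jj}(t)\ge0$ for $t\in[t_0;t_1)$, $j=1,2$, and $y(t_0)=v(t_0)=0$. Then for all $t\in[t_0;t_1)$ $$|y(t)|\le\mathfrak{M}(t)+\int_{t_0}^{t}\biggl|\exp\Bigl\{-\int_\tau^t\bigl(\overline{a}_{11}(s)+a_{22}(s)\bigr)ds\Bigr\}\Bigl[\Bigl(\frac{\overline{a}_{21}}{b_2}\Bigr)'(\tau)+\frac{\overline{a}_{21}(\tau)}{b_2(\tau)}\bigl(\overline{a}_{11}(\tau)+a_{22}(\tau)\bigr)+c_{12}(\tau)\Bigr]\biggr|d\tau,$$ $$|v(t)|\le\mathfrak{M}(t)+\int_{t_0}^{t}\biggl|\exp\Bigl\{-\int_\tau^t\bigl(\overline{a}_{11}(s)+a_{22}(s)\bigr)ds\Bigr\}\Bigl[\Bigl(\frac{a_{12}}{b_1}\Bigr)'(\tau)+\frac{a_{12}(\tau)}{b_1(\tau)}\bigl(\overline{a}_{11}(\tau)+a_{22}(\tau)\bigr)+c_{12}(\tau)\Bigr]\biggr|d\tau,$$ where $$\mathfrak{M}(t)=\max_{\tau\in[t_0;t]}\biggl|\exp\Bigl\{-\int_\tau^t\bigl(\overline{a}_{11}(s)+a_{22}(s)\bigr)ds\Bigr\}\Bigl(\frac{a_{12}(\tau)}{b_1(\tau)}-\frac{\overline{a}_{21}(\tau)}{b_2(\tau)}\Bigr)\biggr|.$$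
   Context: Overline denotes complex conjugation; $\mathrm{Re}$ denotes the real part. *)

From Stdlib Require Import Reals.
From Coquelicot Require Import Coquelicot.

Definition cexp (z : C) : C := (exp (Re z) * cos (Im z), exp (Re z) * sin (Im z))%R.

Definition CRInt (f : R -> C) (a b : R) : C := RInt (V := C_R_CompleteNormedModule) f a b.

Definition cont_on {V : UniformSpace} (f : R -> V) (t0 t1 : R) : Prop :=
  forall t, t0 <= t < t1 ->
    filterlim f (within (fun s => t0 <= s) (locally t)) (locally (f t)).

Definition deriv_on {V : NormedModule R_AbsRing} (f f' : R -> V) (t0 t1 : R) : Prop :=
  forall t, t0 <= t < t1 ->
    filterlim (fun s => scal (/ (s - t)) (minus (f s) (f t)))
      (within (fun s => t0 <= s /\ s <> t) (locally t)) (locally (f' t)).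

Definition C1_on {V : NormedModule R_AbsRing} (f f' : R -> V) (t0 t1 : R) : Prop :=
  cont_on f t0 t1 /\ deriv_on f f' t0 t1 /\ cont_on f' t0 t1.

Definition is_max_on (g : R -> R) (a b M : R) : Prop :=
  (exists tau, a <= tau <= b /\ g tau = M) /\ (forall tau, a <= tau <= b -> g tau <= M).

From Stdlib Require Import Reals Lra.
From Coquelicot Require Import Coquelicot.

(* Both y and v solve a scalar linear equation  y' + (P + A) y = - q w + g  with
   A = conj a11 + a22,  P = b1 z11 + b2 z22 >= 0,  0 <= q <= P  (q = b1 z11, resp. b2 z22),
   w = a12/b1 - conj a21/b2 (resp. - w) and g the remaining forcing term.
   Let E(s) = exp(- int_s^t A) and e(s) = exp(- int_s^t P) <= 1; then
   (e E y)' = e (- q E w + E g).  With u = conj (y t) and M >= |E w| on [t0, t],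
     s |-> Re (u e(s) E(s) y(s)) - |u| (M e(s) + int_t0^s |E g|)
   is nonincreasing on [t0, t]: as e' = P e, this follows from q |E w| <= P M and e <= 1.
   As y t0 = 0, comparing its values at t0 and t gives
   |y t|^2 <= |y t| (M + int_t0^t |E g|). *)

(* Also for [r = 0], where both sides vanish because [/ 0 = 0]. *)
Lemma Cdiv_RtoC (z : C) (r : R) : (z / RtoC r)%C = (z * RtoC (/ r))%C.
Proof.
  destruct z as [x y]; unfold Cdiv, Cmult, Cinv, RtoC; simpl.
  destruct (Req_dec r 0) as [->|Hr].
  - rewrite Rinv_0; f_equal; unfold Rdiv; ring.
  - f_equal; field; exact Hr.
Qed.

Section Limits.
Context {T : Type} {F : (T -> Prop) -> Prop} {FF : Filter F}.

Lemma filterlim_Rplus (f g : T -> R) a b :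
  filterlim f F (locally a) -> filterlim g F (locally b) ->
  filterlim (fun s => f s + g s) F (locally (a + b)).
Proof.
  intros Hf Hg. eapply filterlim_comp_2; eauto.
  apply (filterlim_plus (K := R_AbsRing) (V := R_NormedModule)).
Qed.

Lemma filterlim_Ropp (f : T -> R) a :
  filterlim f F (locally a) -> filterlim (fun s => - f s) F (locally (- a)).
Proof.
  intros Hf. eapply filterlim_comp; eauto.
  apply (filterlim_opp (K := R_AbsRing) (V := R_NormedModule)).
Qed.

Lemma filterlim_Rminus (f g : T -> R) a b :
  filterlim f F (locally a) -> filterlim g F (locally b) ->
  filterlim (fun s => f s - g s) F (locally (a - b)).
Proof. intros. apply filterlim_Rplus; auto. apply filterlim_Ropp; auto. Qed.

Lemma filterlim_Rmult (f g : T -> R) a b :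
  filterlim f F (locally a) -> filterlim g F (locally b) ->
  filterlim (fun s => f s * g s) F (locally (a * b)).
Proof.
  intros Hf Hg. eapply filterlim_comp_2; eauto.
  apply (filterlim_mult (K := R_AbsRing)).
Qed.

Lemma filterlim_C (f : T -> C) (l : C) :
  filterlim f F (@locally C_R_NormedModule l) <->
  filterlim (fun s => Re (f s)) F (locally (Re l)) /\
  filterlim (fun s => Im (f s)) F (locally (Im l)).
Proof.
  split.
  - intros H; split; intros P [eps HP];
      generalize (H _ (@locally_ball C_R_NormedModule l eps));
      unfold filtermap; apply filter_imp; intros s [Hs1 Hs2]; apply HP; assumption.
  - intros [H1 H2] P [eps HP].
    specialize (H1 _ (locally_ball (Re l) eps)).
    specialize (H2 _ (locally_ball (Im l) eps)).
    unfold filtermap in *.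
    generalize (filter_and _ _ H1 H2); apply filter_imp; intros s Hs; apply HP; exact Hs.
Qed.

Ltac filterlim_R :=
  repeat match goal with
  | |- filterlim (fun _ => _ + _) _ _ => apply filterlim_Rplus
  | |- filterlim (fun _ => _ - _) _ _ => apply filterlim_Rminus
  | |- filterlim (fun _ => _ * _) _ _ => apply filterlim_Rmult
  | |- filterlim (fun _ => - _) _ _ => apply filterlim_Ropp
  | |- filterlim (fun _ => sqrt _) _ _ => eapply filterlim_comp; [| apply continuous_sqrt]
  | |- filterlim (fun _ => ?c) _ _ => apply filterlim_const
  | |- _ => assumption
  end.

Ltac filterlim_C_split :=
  apply filterlim_C; repeat match goal with H : filterlim _ _ _ |- _ =>
    apply filterlim_C in H; destruct H end;
  simpl; split; filterlim_R.

Lemma filterlim_Cmult (f g : T -> C) a b :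
  filterlim f F (@locally C_R_NormedModule a) ->
  filterlim g F (@locally C_R_NormedModule b) ->
  filterlim (fun s => (f s * g s)%C) F (@locally C_R_NormedModule (a * b)%C).
Proof. intros; filterlim_C_split. Qed.

Lemma filterlim_Cplus (f g : T -> C) a b :
  filterlim f F (@locally C_R_NormedModule a) ->
  filterlim g F (@locally C_R_NormedModule b) ->
  filterlim (fun s => (f s + g s)%C) F (@locally C_R_NormedModule (a + b)%C).
Proof. intros; filterlim_C_split. Qed.

Lemma filterlim_Cconj (f : T -> C) a :
  filterlim f F (@locally C_R_NormedModule a) ->
  filterlim (fun s => Cconj (f s)) F (@locally C_R_NormedModule (Cconj a)).
Proof. intros; filterlim_C_split. Qed.

Lemma filterlim_RtoC (f : T -> R) a :
  filterlim f F (locally a) ->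
  filterlim (fun s => RtoC (f s)) F (@locally C_R_NormedModule (RtoC a)).
Proof. intros; filterlim_C_split. Qed.

Lemma filterlim_Cmod (f : T -> C) a :
  filterlim f F (@locally C_R_NormedModule a) ->
  filterlim (fun s => Cmod (f s)) F (locally (Cmod a)).
Proof.
  intros H; apply filterlim_C in H as [H1 H2]. unfold Cmod; simpl; filterlim_R.
Qed.

Lemma filterlim_Cdiv_RtoC (f : T -> C) (g : T -> R) a b :
  b <> 0 ->
  filterlim f F (@locally C_R_NormedModule a) -> filterlim g F (locally b) ->
  filterlim (fun s => (f s / RtoC (g s))%C) F (@locally C_R_NormedModule (a / RtoC b)%C).
Proof.
  intros Hb Hf Hg. rewrite Cdiv_RtoC.
  apply (filterlim_ext (fun s => f s * RtoC (/ g s))%C).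
  { intros s; symmetry; apply Cdiv_RtoC. }
  apply filterlim_Cmult, filterlim_RtoC; auto.
  eapply filterlim_comp; [eassumption | apply continuous_Rinv; exact Hb].
Qed.
End Limits.

Notation is_derive_C := (@is_derive R_AbsRing C_R_NormedModule).

Lemma is_derive_C_Re_Im (f : R -> C) x l :
  is_derive_C f x l <->
  is_derive (fun s => Re (f s)) x (Re l) /\ is_derive (fun s => Im (f s)) x (Im l).
Proof.
  split.
  - intros H; unfold is_derive in *; split; eapply filterdiff_ext_lin.
    + apply (filterdiff_comp' f
        (fun z : prod_NormedModule R_AbsRing R_NormedModule R_NormedModule => fst z) x _
        (fun z => fst z) H), filterdiff_linear, is_linear_fst.
    + reflexivity.
    + apply (filterdiff_comp' f
        (fun z : prod_NormedModule R_AbsRing R_NormedModule R_NormedModule => snd z) x _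
        (fun z => snd z) H), filterdiff_linear, is_linear_snd.
    + reflexivity.
  - intros [H1 H2]; unfold is_derive in *.
    eapply filterdiff_ext; [| eapply filterdiff_ext_lin;
      [ apply (filterdiff_comp_2 (fun s => Re (f s)) (fun s => Im (f s))
          (fun a b => (a, b) : C_R_NormedModule) _ _ (fun a b => (a, b)) H1 H2) |] ].
    + intros y; simpl; destruct (f y); reflexivity.
    + apply filterdiff_linear; split.
      * intros [a b] [c d]; reflexivity.
      * intros k [a b]; reflexivity.
      * exists 1; split; [lra | intros [a b]; rewrite Rmult_1_l; apply Rle_refl].
    + intros y; destruct l; reflexivity.
Qed.

Lemma is_derive_Cmult (f g : R -> C) x a b :
  is_derive_C f x a -> is_derive_C g x b ->
  is_derive_C (fun s => (f s * g s)%C) x (a * g x + f x * b)%C.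
Proof.
  intros [Hf1 Hf2]%is_derive_C_Re_Im [Hg1 Hg2]%is_derive_C_Re_Im.
  apply is_derive_C_Re_Im; split; simpl; evar_last.
  - apply (is_derive_minus (fun s => Re (f s) * Re (g s)) (fun s => Im (f s) * Im (g s)));
      apply Derive.is_derive_mult; eassumption.
  - unfold minus, plus, opp, Re, Im; simpl; ring.
  - apply (is_derive_plus (fun s => Re (f s) * Im (g s)) (fun s => Im (f s) * Re (g s)));
      apply Derive.is_derive_mult; eassumption.
  - unfold plus, Re, Im; simpl; ring.
Qed.

Lemma is_derive_cexp (f : R -> C) x a :
  is_derive_C f x a -> is_derive_C (fun s => cexp (f s)) x (a * cexp (f x))%C.
Proof.
  intros [H1 H2]%is_derive_C_Re_Im.
  apply is_derive_C_Re_Im; unfold cexp; split; simpl; evar_last.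
  - apply (Derive.is_derive_mult (fun s => exp (Re (f s))) (fun s => cos (Im (f s)))).
    + apply (is_derive_comp exp (fun s => Re (f s))); [apply is_derive_exp | exact H1].
    + apply (is_derive_comp cos (fun s => Im (f s))); [apply is_derive_cos | exact H2].
  - unfold scal; simpl; unfold mult; simpl; unfold Re, Im; ring.
  - apply (Derive.is_derive_mult (fun s => exp (Re (f s))) (fun s => sin (Im (f s)))).
    + apply (is_derive_comp exp (fun s => Re (f s))); [apply is_derive_exp | exact H1].
    + apply (is_derive_comp sin (fun s => Im (f s))); [apply is_derive_sin | exact H2].
  - unfold scal; simpl; unfold mult; simpl; unfold Re, Im; ring.
Qed.

Lemma is_derive_RtoC (f : R -> R) x a :
  is_derive f x a -> is_derive_C (fun s => RtoC (f s)) x (RtoC a).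
Proof.
  intros H; apply is_derive_C_Re_Im; split; simpl;
    [exact H | apply (is_derive_const (V := R_NormedModule))].
Qed.

Lemma ex_RInt_below {V : CompleteNormedModule R_AbsRing} (f : R -> V) t1 a b :
  (forall s, s < t1 -> continuous f s) -> a < t1 -> b < t1 -> ex_RInt f a b.
Proof.
  intros Hc Ha Hb. apply ex_RInt_continuous. intros z Hz. apply Hc.
  assert (Rmax a b < t1) by (apply Rmax_lub_lt; assumption). lra.
Qed.

Lemma is_derive_RInt_lower {V : CompleteNormedModule R_AbsRing} (f : R -> V) t t1 x :
  (forall s, s < t1 -> continuous f s) -> t < t1 -> x < t1 ->
  is_derive (fun s => RInt f s t) x (opp (f x)).
Proof.
  intros Hc Ht Hx. apply (is_derive_RInt' f (fun s => RInt f s t) x t); [| apply Hc, Hx].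
  generalize (open_lt t1 x Hx). apply filter_imp. intros a Ha.
  apply RInt_correct, (ex_RInt_below _ t1); assumption.
Qed.

Lemma is_derive_RInt_upper {V : CompleteNormedModule R_AbsRing} (f : R -> V) t t1 x :
  (forall s, s < t1 -> continuous f s) -> t < t1 -> x < t1 ->
  is_derive (fun s => RInt f t s) x (f x).
Proof.
  intros Hc Ht Hx. apply (is_derive_RInt f (fun s => RInt f t s) t x); [| apply Hc, Hx].
  generalize (open_lt t1 x Hx). apply filter_imp. intros a Ha.
  apply RInt_correct, (ex_RInt_below _ t1); assumption.
Qed.

(* Extending a function on [[t0, t1)] by [f (Rmax s t0)] turns one-sided continuity
   at [t0] into two-sided continuity, so the two-sided calculus lemmas apply. *)
Lemma filterlim_Rmax_within (t0 s : R) :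
  filterlim (fun x => Rmax x t0) (locally s)
    (within (fun u => t0 <= u) (locally (Rmax s t0))).
Proof.
  intros P [eps HP]. exists eps. intros x Hx. apply HP; [| apply Rmax_r].
  revert Hx; unfold ball; simpl; unfold AbsRing_ball, abs, minus, plus, opp; simpl.
  intros Hx. eapply Rle_lt_trans; [| exact Hx].
  unfold Rmax; destruct (Rle_dec x t0), (Rle_dec s t0);
    unfold Rabs; repeat destruct Rcase_abs; lra.
Qed.

Lemma continuous_Rmax_ext {V : UniformSpace} (f : R -> V) t0 t1 :
  t0 < t1 -> cont_on f t0 t1 -> forall s, s < t1 -> continuous (fun x => f (Rmax x t0)) s.
Proof.
  intros Ht Hf s Hs. eapply filterlim_comp; [apply filterlim_Rmax_within |].
  apply Hf. split; [apply Rmax_r | apply Rmax_lub_lt; assumption].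
Qed.

Lemma is_derive_of_quotient_within (f : R -> R) (D : R -> Prop) c l :
  locally c D ->
  filterlim (fun s => / (s - c) * (f s - f c)) (within (fun s => D s /\ s <> c) (locally c))
    (locally l) ->
  is_derive f c l.
Proof.
  intros [d1 HD] H. apply is_derive_Reals. intros eps Heps.
  destruct (H _ (locally_ball l (mkposreal eps Heps))) as [d2 Hd2].
  exists (mkposreal _ (Rmin_pos _ _ (cond_pos d1) (cond_pos d2))).
  intros h Hh0 Hh; simpl in Hh.
  assert (Hball : forall d : posreal, Rabs h < d -> ball c d (c + h)).
  { intros d Hd. unfold ball; simpl; unfold AbsRing_ball, abs, minus, plus, opp; simpl.
    replace (c + h + - c) with h by ring. exact Hd. }
  specialize (Hd2 (c + h) (Hball d2 (Rlt_le_trans _ _ _ Hh (Rmin_r _ _)))).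
  assert (Hne : c + h <> c) by (intros E; apply Hh0; lra).
  specialize (Hd2 (conj (HD _ (Hball d1 (Rlt_le_trans _ _ _ Hh (Rmin_l _ _)))) Hne)).
  revert Hd2; unfold ball; simpl; unfold AbsRing_ball, abs, minus, plus, opp; simpl.
  replace (c + h - c) with h by ring. unfold Rdiv. rewrite Rmult_comm. auto.
Qed.

Lemma is_derive_Rmax_ext (f f' : R -> C) t0 t1 c :
  deriv_on (V := C_R_NormedModule) f f' t0 t1 -> t0 < c < t1 ->
  is_derive_C (fun s => f (Rmax s t0)) c (f' c).
Proof.
  intros Hf Hc. apply (is_derive_ext_loc f).
  { generalize (open_gt t0 c (proj1 Hc)). apply filter_imp. intros s Hs.
    rewrite Rmax_left by lra; reflexivity. }
  specialize (Hf c ltac:(lra)); apply filterlim_C in Hf as [H1 H2].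
  apply is_derive_C_Re_Im; split;
    apply (is_derive_of_quotient_within _ (fun s => t0 <= s)); try assumption.
  all: generalize (open_gt t0 c (proj1 Hc)); apply filter_imp; intros; lra.
Qed.

Lemma RInt_Rmax_ext {V : CompleteNormedModule R_AbsRing} (f : R -> V) t0 a b :
  t0 <= a <= b -> RInt (fun s => f (Rmax s t0)) a b = RInt f a b.
Proof.
  intros H. apply RInt_ext. intros z Hz.
  rewrite Rmin_left, Rmax_right in Hz by lra. rewrite Rmax_left by lra. reflexivity.
Qed.

(** * The scalar linear estimate *)

Lemma Re_damped_forcing_le (u a b : C) (e q P M : R) :
  0 < e <= 1 -> 0 <= q <= P -> Cmod a <= M ->
  Re (u * (RtoC e * (- RtoC q * a + b)))%C <= Cmod u * (e * (P * M) + Cmod b).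
Proof.
  intros He Hq Ha.
  assert (Hexp : Re (u * (RtoC e * (- RtoC q * a + b)))%C
                 = e * (q * - Re (u * a)%C + Re (u * b)%C)).
  { destruct u, a, b; unfold Re, Cmult, Cplus, Copp, RtoC; simpl; ring. }
  assert (Hua : - Re (u * a)%C <= Cmod u * M).
  { apply Rle_trans with (Cmod (u * a)%C).
    - pose proof (re_le_Cmod (u * a)%C). apply Rabs_le_between in H. lra.
    - rewrite Cmod_mult. apply Rmult_le_compat_l; [apply Cmod_ge_0 | exact Ha]. }
  assert (Hub : Re (u * b)%C <= Cmod u * Cmod b).
  { rewrite <- Cmod_mult. pose proof (re_le_Cmod (u * b)%C). apply Rabs_le_between in H. lra. }
  pose proof (Cmod_ge_0 u). pose proof (Cmod_ge_0 a). pose proof (Cmod_ge_0 b).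
  assert (HqP : q * - Re (u * a)%C <= P * (Cmod u * M)).
  { apply Rle_trans with (q * (Cmod u * M)); [apply Rmult_le_compat_l; lra |].
    apply Rmult_le_compat_r; [apply Rmult_le_pos |]; lra. }
  assert (Heb : e * Re (u * b)%C <= Cmod u * Cmod b).
  { destruct (Rle_dec 0 (Re (u * b)%C)); [| nra].
    apply Rle_trans with (Re (u * b)%C); [| exact Hub].
    rewrite <- (Rmult_1_l (Re (u * b)%C)) at 2. apply Rmult_le_compat_r; lra. }
  rewrite Hexp. nra.
Qed.

Lemma le_of_is_derive_nonpos (f : R -> R) a b :
  a <= b ->
  (forall x, a < x < b -> exists D, is_derive f x D /\ D <= 0) ->
  (forall x, a <= x <= b -> continuity_pt f x) ->
  f b <= f a.
Proof.
  intros Hab Hd Hc.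
  destruct (MVT_gen f a b (fun x => Rmin (Derive f x) 0)) as [c [_ Heq]].
  - rewrite Rmin_left, Rmax_right by lra. intros x Hx.
    destruct (Hd x Hx) as [D [HD HD0]].
    rewrite (is_derive_unique f x D HD), Rmin_left by lra. exact HD.
  - rewrite Rmin_left, Rmax_right by lra. exact Hc.
  - pose proof (Rmin_r (Derive f c) 0). nra.
Qed.

Section DampedLinearEstimate.

Variables (t0 t1 t M : R) (A : R -> C) (P q : R -> R) (w g y y' : R -> C).

Hypothesis Ht : t0 <= t < t1.
Hypothesis cont_A : forall s, s < t1 -> continuous (U := C_R_NormedModule) A s.
Hypothesis cont_P : forall s, s < t1 -> continuous P s.
Hypothesis cont_g : forall s, s < t1 -> continuous (U := C_R_NormedModule) g s.
Hypothesis cont_y : forall s, s < t1 -> continuous (U := C_R_NormedModule) y s.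
Hypothesis deriv_y : forall s, t0 < s < t -> is_derive_C y s (y' s).
Hypothesis q_bounds : forall s, t0 <= s <= t -> 0 <= q s <= P s.
Hypothesis ode : forall s, t0 < s < t ->
  (y' s + (RtoC (P s) + A s) * y s = - RtoC (q s) * w s + g s)%C.
Hypothesis y_t0 : y t0 = RtoC 0.

Definition propagator (s : R) : C := cexp (- CRInt A s t).
Definition damping (s : R) : R := exp (- RInt P s t).

Hypothesis w_bound : forall tau, t0 <= tau <= t -> Cmod (propagator tau * w tau) <= M.

Definition forcing_norm (s : R) : R := Cmod (propagator s * g s).
Definition majorant (s : R) : R := M * damping s + RInt forcing_norm t0 s.
Definition transported (s : R) : C := (RtoC (damping s) * propagator s * y s)%C.
Definition lyapunov (s : R) : R := Re (Cconj (y t) * transported s) - Cmod (y t) * majorant s.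

Lemma is_derive_propagator x : x < t1 -> is_derive_C propagator x (A x * propagator x)%C.
Proof.
  intros Hx. unfold propagator. evar_last.
  - apply is_derive_cexp, (is_derive_opp (V := C_R_NormedModule) (fun s => CRInt A s t)).
    apply (is_derive_RInt_lower (V := C_R_CompleteNormedModule) A t t1 x cont_A); lra.
  - rewrite opp_opp. reflexivity.
Qed.

Lemma is_derive_damping x : x < t1 -> is_derive damping x (P x * damping x).
Proof.
  intros Hx. unfold damping. evar_last.
  - apply (is_derive_comp exp (fun s => - RInt P s t)); [apply is_derive_exp |].
    apply (is_derive_opp (fun s => RInt P s t)).
    apply (is_derive_RInt_lower (V := R_CompleteNormedModule) P t t1 x cont_P); lra.
  - unfold scal, opp; simpl; unfold mult; simpl. ring.
Qed.

Lemma continuous_propagator x : x < t1 -> continuous (U := C_R_NormedModule) propagator x.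
Proof.
  intros Hx. apply (ex_derive_continuous (V := C_R_NormedModule)).
  eexists; apply is_derive_propagator, Hx.
Qed.

Lemma continuous_forcing_norm x : x < t1 -> continuous forcing_norm x.
Proof.
  intros Hx. apply filterlim_Cmod, filterlim_Cmult;
    [apply continuous_propagator | apply cont_g]; exact Hx.
Qed.

Lemma is_derive_majorant x : x < t1 ->
  is_derive majorant x (M * (P x * damping x) + forcing_norm x).
Proof.
  intros Hx. unfold majorant.
  apply (is_derive_plus (fun s => M * damping s) (fun s => RInt forcing_norm t0 s)).
  - apply is_derive_scal, is_derive_damping, Hx.
  - apply (is_derive_RInt_upper (V := R_CompleteNormedModule) _ t0 t1 x continuous_forcing_norm);
      lra.
Qed.

Lemma damping_bounds x : t0 <= x <= t -> 0 < damping x <= 1.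
Proof.
  intros Hx. split; [apply exp_pos |]. unfold damping. rewrite <- exp_0.
  assert (HP : 0 <= RInt P x t).
  { apply RInt_ge_0; [lra | apply (ex_RInt_below _ t1 _ _ cont_P); lra |].
    intros z Hz; assert (Hz' := q_bounds z ltac:(lra)); lra. }
  destruct (Req_dec (RInt P x t) 0) as [-> | HP0].
  - rewrite Ropp_0; lra.
  - left; apply exp_increasing; lra.
Qed.

Lemma is_derive_transported x : t0 < x < t ->
  is_derive_C transported x
    (RtoC (damping x) * (- RtoC (q x) * (propagator x * w x) + propagator x * g x))%C.
Proof.
  intros Hx. unfold transported. evar_last.
  - apply (is_derive_Cmult (fun s => RtoC (damping s) * propagator s)%C y);
      [apply (is_derive_Cmult (fun s => RtoC (damping s)) propagator) |].
    + apply is_derive_RtoC, is_derive_damping; lra.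
    + apply is_derive_propagator; lra.
    + apply deriv_y, Hx.
  - transitivity (RtoC (damping x) * propagator x * (y' x + (RtoC (P x) + A x) * y x))%C.
    + rewrite RtoC_mult; ring.
    + rewrite ode by exact Hx; ring.
Qed.

Lemma continuous_transported x : x < t1 ->
  continuous (U := C_R_NormedModule) transported x.
Proof.
  intros Hx. apply filterlim_Cmult; [apply filterlim_Cmult |].
  - apply filterlim_RtoC, (ex_derive_continuous (V := R_NormedModule)).
    eexists; apply is_derive_damping, Hx.
  - apply continuous_propagator, Hx.
  - apply cont_y, Hx.
Qed.

Lemma is_derive_lyapunov_nonpos x : t0 < x < t ->
  exists D, is_derive lyapunov x D /\ D <= 0.
Proof.
  intros Hx.
  set (u := Cconj (y t)).
  set (dz := (RtoC (damping x) * (- RtoC (q x) * (propagator x * w x) + propagator x * g x))%C).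
  exists (Re (zero * transported x + u * dz)%C
          - Cmod (y t) * (M * (P x * damping x) + forcing_norm x)).
  split.
  - apply (is_derive_minus (fun s => Re (u * transported s)%C)
                           (fun s => Cmod (y t) * majorant s)).
    + apply (is_derive_C_Re_Im (fun s => u * transported s)%C).
      apply (is_derive_Cmult (fun _ => u)); [apply (is_derive_const (V := C_R_NormedModule) u) |].
      apply is_derive_transported, Hx.
    + apply is_derive_scal, is_derive_majorant; lra.
  - change (zero : C_R_NormedModule) with (RtoC 0).
    rewrite Cmult_0_l, Cplus_0_l.
    assert (Hle := Re_damped_forcing_le u (propagator x * w x) (propagator x * g x)
                     (damping x) (q x) (P x) M (damping_bounds x ltac:(lra))
                     (q_bounds x ltac:(lra)) (w_bound x ltac:(lra))).
    unfold u in Hle; rewrite Cmod_conj in Hle.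
    unfold dz, u, forcing_norm. lra.
Qed.

Lemma continuous_lyapunov x : x < t1 -> continuity_pt lyapunov x.
Proof.
  intros Hx. apply continuity_pt_filterlim. unfold lyapunov.
  apply filterlim_Rminus.
  - apply (filterlim_C (fun s => Cconj (y t) * transported s)%C).
    apply filterlim_Cmult; [apply filterlim_const | apply continuous_transported, Hx].
  - apply filterlim_Rmult; [apply filterlim_const |].
    apply (ex_derive_continuous (V := R_NormedModule)).
    eexists; apply is_derive_majorant, Hx.
Qed.

Lemma damping_at_t : damping t = 1.
Proof. unfold damping. rewrite RInt_point, <- exp_0. f_equal. apply Ropp_0. Qed.

Lemma transported_at_t : transported t = y t.
Proof.
  unfold transported, propagator, CRInt. rewrite damping_at_t, RInt_point.
  unfold cexp, zero; simpl; unfold zero; simpl.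
  rewrite Ropp_0, exp_0, cos_0, sin_0, Rmult_0_r, Rmult_1_r.
  destruct (y t); unfold Cmult; simpl; f_equal; ring.
Qed.

Theorem damped_linear_estimate :
  Cmod (y t) <= M + RInt (fun tau => Cmod (cexp (- CRInt A tau t) * g tau)) t0 t.
Proof.
  assert (Hdecr : lyapunov t <= lyapunov t0).
  { apply le_of_is_derive_nonpos; [lra | exact is_derive_lyapunov_nonpos |].
    intros x Hx; apply continuous_lyapunov; lra. }
  assert (HM : 0 <= M) by (eapply Rle_trans; [apply Cmod_ge_0 | apply (w_bound t0); lra]).
  assert (HI : 0 <= RInt forcing_norm t0 t).
  { apply RInt_ge_0; [lra | apply (ex_RInt_below _ t1 _ _ continuous_forcing_norm); lra |].
    intros; apply Cmod_ge_0. }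
  assert (Hd0 := damping_bounds t0 ltac:(lra)).
  assert (Hy := Cmod_ge_0 (y t)).
  assert (Hsq : Re (Cconj (y t) * y t)%C = Cmod (y t) ^ 2).
  { rewrite Cmod2_alt. destruct (y t); unfold Re, Im, Cconj, Cmult; simpl; ring. }
  unfold lyapunov, majorant in Hdecr.
  rewrite transported_at_t, Hsq in Hdecr.
  unfold transported in Hdecr; rewrite y_t0, !Cmult_0_r, RInt_point, damping_at_t in Hdecr.
  change (Re (RtoC 0)) with 0 in Hdecr; change (zero : R) with 0 in Hdecr.
  unfold forcing_norm, propagator in *.
  set (I := RInt _ t0 t) in *.
  destruct (Rle_lt_or_eq_dec _ _ Hy) as [Hpos | H0]; [| rewrite <- H0; lra].
  assert (Hprod : Cmod (y t) * (Cmod (y t) - (M + I)) <= 0).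
  { assert (0 <= Cmod (y t) * (M * damping t0)) by (apply Rmult_le_pos; nra). nra. }
  nra.
Qed.
End DampedLinearEstimate.

Lemma damped_linear_estimate_on (t0 t1 t M : R) (A : R -> C) (P q : R -> R)
  (w g y y' : R -> C) :
  t0 < t1 -> t0 <= t < t1 ->
  cont_on (V := C_R_NormedModule) A t0 t1 -> cont_on (V := R_NormedModule) P t0 t1 ->
  cont_on (V := C_R_NormedModule) g t0 t1 -> cont_on (V := C_R_NormedModule) y t0 t1 ->
  deriv_on (V := C_R_NormedModule) y y' t0 t1 ->
  (forall s, t0 <= s < t1 -> 0 <= q s <= P s) ->
  (forall s, t0 <= s < t1 ->
     (y' s + (RtoC (P s) + A s) * y s = - RtoC (q s) * w s + g s)%C) ->
  y t0 = RtoC 0 ->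
  (forall tau, t0 <= tau <= t -> Cmod (cexp (- CRInt A tau t) * w tau) <= M) ->
  Cmod (y t) <= M + RInt (fun tau => Cmod (cexp (- CRInt A tau t) * g tau)) t0 t.
Proof.
  intros H01 Ht cA cP cg cy dy Hq Hode Hy0 Hw.
  assert (Hmax : forall s, t0 <= s -> Rmax s t0 = s) by (intros; apply Rmax_left; lra).
  assert (HIA : forall tau, t0 <= tau <= t ->
                  CRInt (fun s => A (Rmax s t0)) tau t = CRInt A tau t)
    by (intros; apply (RInt_Rmax_ext (V := C_R_CompleteNormedModule)); lra).
  assert (Hest := damped_linear_estimate t0 t1 t M (fun s => A (Rmax s t0))
    (fun s => P (Rmax s t0)) (fun s => q (Rmax s t0)) (fun s => w (Rmax s t0))
    (fun s => g (Rmax s t0)) (fun s => y (Rmax s t0)) y' Ht).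
  cbv beta in Hest; rewrite (Hmax t) in Hest by lra.
  erewrite RInt_ext; [apply Hest | ..]; clear Hest.
  - intros s Hs; apply (continuous_Rmax_ext A t0 t1); assumption.
  - intros s Hs; apply (continuous_Rmax_ext P t0 t1); assumption.
  - intros s Hs; apply (continuous_Rmax_ext g t0 t1); assumption.
  - intros s Hs; apply (continuous_Rmax_ext y t0 t1); assumption.
  - intros s Hs; apply (is_derive_Rmax_ext y y' t0 t1); [assumption | lra].
  - intros s Hs; rewrite Hmax by lra; apply Hq; lra.
  - intros s Hs; rewrite Hmax by lra; apply Hode; lra.
  - rewrite Hmax by lra; exact Hy0.
  - intros tau Htau; unfold propagator; rewrite HIA, Hmax by lra; apply Hw, Htau.
  - intros tau Htau. rewrite Rmin_left, Rmax_right in Htau by lra.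
    cbv beta; rewrite HIA, Hmax by lra. reflexivity.
Qed.

(** * The off-diagonal equations of the Riccati system *)

Lemma offdiag_linear_form (y' y P A alpha beta d c : C) (b b' z : R) :
  b <> 0 -> b' <> 0 ->
  (y' + (P + A) * y + (alpha - RtoC (b / b') * beta) * RtoC z
     - d - beta / RtoC b' * A - c = 0)%C ->
  (y' + (P + A) * y
     = - RtoC (b * z) * (alpha / RtoC b - beta / RtoC b') + (d + beta / RtoC b' * A + c))%C.
Proof.
  intros Hb Hb' H.
  assert (Hb0 : RtoC b <> 0) by (intros E; apply Hb, RtoC_inj, E).
  assert (Hb0' : RtoC b' <> 0) by (intros E; apply Hb', RtoC_inj, E).
  rewrite RtoC_div in H by exact Hb'. rewrite RtoC_mult.
  transitivity ((y' + (P + A) * y + (alpha - RtoC b / RtoC b' * beta) * RtoC z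
                  - d - beta / RtoC b' * A - c)
                - (alpha - RtoC b / RtoC b' * beta) * RtoC z + (d + beta / RtoC b' * A + c))%C.
  - ring.
  - rewrite H. field. split; assumption.
Qed.

Lemma offdiag_estimate (t0 t1 t M : R) (A alpha beta d c y y' : R -> C) (P b b' z : R -> R) :
  t0 < t1 -> t0 <= t < t1 ->
  cont_on (V := C_R_NormedModule) A t0 t1 -> cont_on (V := R_NormedModule) P t0 t1 ->
  cont_on (V := C_R_NormedModule) beta t0 t1 -> cont_on (V := R_NormedModule) b' t0 t1 ->
  cont_on (V := C_R_NormedModule) d t0 t1 -> cont_on (V := C_R_NormedModule) c t0 t1 ->
  cont_on (V := C_R_NormedModule) y t0 t1 -> deriv_on (V := C_R_NormedModule) y y' t0 t1 ->
  (forall s, t0 <= s < t1 -> 0 < b s /\ 0 < b' s) ->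
  (forall s, t0 <= s < t1 -> 0 <= b s * z s <= P s) ->
  (forall s, t0 <= s < t1 ->
     (y' s + (RtoC (P s) + A s) * y s + (alpha s - RtoC (b s / b' s) * beta s) * RtoC (z s)
        - d s - beta s / RtoC (b' s) * A s - c s = 0)%C) ->
  y t0 = RtoC 0 ->
  (forall tau, t0 <= tau <= t ->
     Cmod (cexp (- CRInt A tau t) * (alpha tau / RtoC (b tau) - beta tau / RtoC (b' tau))) <= M) ->
  Cmod (y t) <= M + RInt (fun tau => Cmod (cexp (- CRInt A tau t)
                          * (d tau + beta tau / RtoC (b' tau) * A tau + c tau))) t0 t.
Proof.
  intros H01 Ht cA cP cbeta cb' cd cc cy dy Hb Hq Hode Hy0 Hw.
  apply (damped_linear_estimate_on t0 t1 t M A P (fun s => b s * z s)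
           (fun s => alpha s / RtoC (b s) - beta s / RtoC (b' s))%C _ y y'); try assumption.
  - intros s Hs. specialize (Hb s Hs).
    apply filterlim_Cplus; [apply filterlim_Cplus |]; [apply cd, Hs | | apply cc, Hs].
    apply filterlim_Cmult; [| apply cA, Hs].
    apply filterlim_Cdiv_RtoC; [lra | apply cbeta, Hs | apply cb', Hs].
  - intros s Hs. specialize (Hb s Hs).
    apply offdiag_linear_form; [lra | lra | apply Hode, Hs].
Qed.

Theorem lemma2p2
  (t0 t1 : R) (a11 a12 a21 a22 c12 c21 : R -> C) (c11 c22 b1 b2 : R -> R)
  (d1 d2 : R -> C) (z11 z22 z11' z22' : R -> R) (y v y' v' : R -> C) :
  (t0 < t1)%R ->
  cont_on (V := C_R_NormedModule) a11 t0 t1 -> cont_on (V := C_R_NormedModule) a12 t0 t1 ->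
  cont_on (V := C_R_NormedModule) a21 t0 t1 -> cont_on (V := C_R_NormedModule) a22 t0 t1 ->
  cont_on (V := R_NormedModule) c11 t0 t1 -> cont_on (V := R_NormedModule) c22 t0 t1 ->
  cont_on (V := C_R_NormedModule) c12 t0 t1 -> cont_on (V := C_R_NormedModule) c21 t0 t1 ->
  (forall t, (t0 <= t < t1)%R -> c21 t = Cconj (c12 t)) ->
  cont_on (V := R_NormedModule) b1 t0 t1 -> cont_on (V := R_NormedModule) b2 t0 t1 ->
  (forall t, (t0 <= t < t1)%R -> (0 < b1 t)%R /\ (0 < b2 t)%R) ->
  C1_on (V := C_R_NormedModule) (fun t => (a12 t / RtoC (b1 t))%C) d1 t0 t1 ->
  C1_on (V := C_R_NormedModule) (fun t => (Cconj (a21 t) / RtoC (b2 t))%C) d2 t0 t1 ->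
  C1_on (V := R_NormedModule) z11 z11' t0 t1 -> C1_on (V := R_NormedModule) z22 z22' t0 t1 ->
  C1_on (V := C_R_NormedModule) y y' t0 t1 -> C1_on (V := C_R_NormedModule) v v' t0 t1 ->
  (forall t, (t0 <= t < t1)%R ->
     (z11' t + b1 t * (z11 t) ^ 2 + 2 * Re (a11 t) * z11 t + b2 t * (Cmod (y t)) ^ 2
       - (Cmod (a21 t)) ^ 2 / b2 t - c11 t = 0)%R) ->
  (forall t, (t0 <= t < t1)%R ->
     (y' t + (RtoC (b1 t * z11 t + b2 t * z22 t) + Cconj (a11 t) + a22 t) * y t
       + (a12 t - RtoC (b1 t / b2 t) * Cconj (a21 t)) * RtoC (z11 t)
       - d2 t - Cconj (a21 t) / RtoC (b2 t) * (Cconj (a11 t) + a22 t) - c12 t = 0)%C) ->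
  (forall t, (t0 <= t < t1)%R ->
     (z22' t + b2 t * (z22 t) ^ 2 + 2 * Re (a22 t) * z22 t + b1 t * (Cmod (v t)) ^ 2
       - (Cmod (a12 t)) ^ 2 / b1 t - c22 t = 0)%R) ->
  (forall t, (t0 <= t < t1)%R ->
     (v' t + (RtoC (b1 t * z11 t + b2 t * z22 t) + Cconj (a11 t) + a22 t) * v t
       + (Cconj (a21 t) - RtoC (b2 t / b1 t) * a12 t) * RtoC (z22 t)
       - d1 t - a12 t / RtoC (b1 t) * (Cconj (a11 t) + a22 t) - c12 t = 0)%C) ->
  (forall t, (t0 <= t < t1)%R -> (0 <= z11 t)%R /\ (0 <= z22 t)%R) ->
  y t0 = RtoC 0 -> v t0 = RtoC 0 ->
  forall t M, (t0 <= t < t1)%R ->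
    is_max_on (fun tau => Cmod (cexp (- CRInt (fun s => (Cconj (a11 s) + a22 s)%C) tau t)
                 * (a12 tau / RtoC (b1 tau) - Cconj (a21 tau) / RtoC (b2 tau)))%C) t0 t M ->
    (Cmod (y t) <= M + RInt (fun tau =>
        Cmod (cexp (- CRInt (fun s => (Cconj (a11 s) + a22 s)%C) tau t)
          * (d2 tau + Cconj (a21 tau) / RtoC (b2 tau) * (Cconj (a11 tau) + a22 tau)
             + c12 tau))%C) t0 t)%R /\
    (Cmod (v t) <= M + RInt (fun tau =>
        Cmod (cexp (- CRInt (fun s => (Cconj (a11 s) + a22 s)%C) tau t)
          * (d1 tau + a12 tau / RtoC (b1 tau) * (Cconj (a11 tau) + a22 tau)
             + c12 tau))%C) t0 t)%R.
Proof.
  intros H01 ca11 ca12 ca21 ca22 _ _ cc12 _ _ cb1 cb2 Hb [_ [_ cd1]] [_ [_ cd2]]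
    [cz11 _] [cz22 _] [cy [dy _]] [cv [dv _]] _ Ey _ Ev Hz Hy0 Hv0 t M Ht [_ HM].
  set (A := fun s => (Cconj (a11 s) + a22 s)%C).
  set (P := fun s => b1 s * z11 s + b2 s * z22 s).
  assert (cA : cont_on (V := C_R_NormedModule) A t0 t1).
  { intros s Hs; apply filterlim_Cplus; [apply filterlim_Cconj |]; auto. }
  assert (cP : cont_on (V := R_NormedModule) P t0 t1).
  { intros s Hs; apply filterlim_Rplus; apply filterlim_Rmult; auto. }
  split.
  - apply (offdiag_estimate t0 t1 t M A a12 (fun s => Cconj (a21 s)) d2 c12 y y' P b1 b2 z11);
      try assumption.
    + intros s Hs; apply filterlim_Cconj, ca21, Hs.
    + intros s Hs; specialize (Hb s Hs); specialize (Hz s Hs); unfold P; split; nra.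
    + intros s Hs; unfold A, P; rewrite Cplus_assoc; apply Ey, Hs.
  - apply (offdiag_estimate t0 t1 t M A (fun s => Cconj (a21 s)) a12 d1 c12 v v' P b2 b1 z22);
      try assumption.
    + intros s Hs; specialize (Hb s Hs); split; apply Hb.
    + intros s Hs; specialize (Hb s Hs); specialize (Hz s Hs); unfold P; split; nra.
    + intros s Hs; unfold A, P; rewrite Cplus_assoc; apply Ev, Hs.
    + intros tau Htau; rewrite <- Cmod_opp; eapply Rle_trans, (HM tau Htau).
      right; f_equal; unfold A; ring.
Qed.
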